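(* Let $(S,\ast)$ be a countable adequate partial semigroup and let $A\subseteq S$. If there is an idempotent $p\in\overline{A}\cap J_\delta(S)$, then there is a decreasing sequence $\langle A_n\rangle_{n=1}^\infty$ of subsets of $A$ such that (i) for all $n\in\mathbb{N}$ and all $x\in A_n$ there exists $m\in\mathbb{N}$ with $A_m\subseteq x^{-1}A_n$; (ii) for all $n\in\mathbb{N}$, $A_n$ is a $J_\delta$-set.
   Context: A partial semigroup is a pair $(S,\ast)$ where $\ast$ is an operation defined on a subset of $S\times S$ such that $(x\ast y)\ast z=x\ast(y\ast z)$ in the sense that if either side is defined, so is the other and they are equal. $\phi_S(s)=\{t: s\ast t\text{ defined}\}$, $\sigma_S(H)=\bigcap_{s\in H}\phi_S(s)$ for $H\in\mathcal{P}_f(S)$; $S$ is adequate if all $\sigma_S(H)\ne\emptyset$. $\overline{A}=\{p\in\beta S: A\in p\}$. $\delta S=\bigcap_{x\in S}\overline{\phi_S(x)}$, with operation $p\ast q=\{B\subseteq S:\{s: s^{-1}B\in q\}\in p\}$, where $s^{-1}B=\{t\in\phi_S(s): s\ast t\in B\}$. A sequence $\langle y_n\rangle$ in $S$ is adequate if $\prod_{n\in F}y_n$ is defined for every $F\in\mathcal{P}_f(\mathbb{N})$ and for every $K\in\mathcal{P}_f(S)$ there is $m$ with $\prod_{n\in F}y_n\in\sigma_S(K)$ whenever $\min F\ge m$; $\mathcal{T}_S$ is the set of adequate sequences. For $W\in\mathcal{P}_f(S)$, $a\in S$, $W\ast a=\{w\ast a: w\in W,\ w\ast a\text{ defined}\}$.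 $B\subseteq S$ is a $J_\delta$-set if for every $F\in\mathcal{P}_f(\mathcal{T}_S)$ and $W\in\mathcal{P}_f(S)$ there exist $a\in\sigma_S(W)$ and $H\in\mathcal{P}_f(\mathbb{N})$ with $\prod_{t\in H}f(t)\in\sigma_S(W\ast a)$ and $a\ast\prod_{t\in H}f(t)\in B$ for each $f\in F$; $J_\delta(S)=\{p\in\delta S:\text{every member of }p\text{ is a }J_\delta\text{-set}\}$. *)

From Stdlib Require Import List Arith Sorted.
Import ListNotations.

Section PS.
Variable T : Type.
Variable op : T -> T -> option T.   (* x * y; None = undefined *)

(* (x*y)*z = x*(y*z): either side defined iff the other is, and then equal *)
Definition partial_semigroup : Prop :=
  forall x y z : T,
    match op x y with Some u => op u z | None => None end =
    match op y z with Some v => op x v | None => None end.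

Definition countable : Prop := exists f : T -> nat, forall x y, f x = f y -> x = y.

Definition phi (s : T) : T -> Prop := fun t => op s t <> None.

(* sigma_S(H), H a nonempty finite subset given as a nonempty list *)
Definition sigma (H : list T) : T -> Prop := fun t => forall s, In s H -> phi s t.

Definition adequate : Prop := forall H : list T, H <> [] -> exists t, sigma H t.

Definition inv (s : T) (B : T -> Prop) : T -> Prop :=
  fun t => exists u, op s t = Some u /\ B u.

Definition ultrafilter (p : (T -> Prop) -> Prop) : Prop :=
  p (fun _ => True) /\
  ~ p (fun _ => False) /\
  (forall A B : T -> Prop, p A -> (forall x, A x -> B x) -> p B) /\
  (forall A B : T -> Prop, p A -> p B -> p (fun x => A x /\ B x)) /\
  (forall A : T -> Prop, p A \/ p (fun x => ~ A x)).

Definition in_deltaS (p : (T -> Prop) -> Prop) : Prop :=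
  ultrafilter p /\ forall x : T, p (phi x).

Definition conv (p q : (T -> Prop) -> Prop) : (T -> Prop) -> Prop :=
  fun B => p (fun s => q (inv s B)).

Definition idempotent (p : (T -> Prop) -> Prop) : Prop :=
  forall B : T -> Prop, conv p p B <-> p B.

(* nonempty finite subsets of N represented as strictly increasing nonempty lists *)
Definition fin_index (F : list nat) : Prop := F <> [] /\ StronglySorted lt F.

Fixpoint prod_seq (y : nat -> T) (F : list nat) : option T :=
  match F with
  | [] => None
  | [n] => Some (y n)
  | n :: F' => match prod_seq y F' with Some v => op (y n) v | None => None end
  end.

Definition adequate_seq (y : nat -> T) : Prop :=
  (forall F, fin_index F -> prod_seq y F <> None) /\
  (forall K : list T, K <> [] -> exists m : nat,
     forall F, fin_index F -> (forall n, In n F -> m <= n) ->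
       exists v, prod_seq y F = Some v /\ sigma K v).

(* sigma_S(W * a), where W*a = {w*a : w in W, w*a defined} *)
Definition sigma_Wa (W : list T) (a : T) : T -> Prop :=
  fun t => forall w z, In w W -> op w a = Some z -> phi z t.

Definition Jdelta_set (B : T -> Prop) : Prop :=
  forall (F : list (nat -> T)) (W : list T),
    F <> [] -> (forall f, In f F -> adequate_seq f) -> W <> [] ->
    exists a H, sigma W a /\ fin_index H /\
      forall f, In f F ->
        exists v, prod_seq f H = Some v /\ sigma_Wa W a v /\
                  exists u, op a v = Some u /\ B u.

Definition in_Jdelta (p : (T -> Prop) -> Prop) : Prop :=
  in_deltaS p /\ forall B, p B -> Jdelta_set B.

End PS.
Arguments partial_semigroup {T} op.
Arguments adequate {T} op.
Arguments inv {T} op s B _.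
Arguments idempotent {T} op p.
Arguments in_Jdelta {T} op p.
Arguments Jdelta_set {T} op B.
Arguments countable T : clear implicits.

From Stdlib Require Import Arith Lia Classical.

(* For an idempotent p and B in p, the set B* = {x in B : x^-1 B in p} is again
   in p, and x^-1 B* is in p for every x in B*.  Fix an injective code f of S
   into N and put A_0 = A*, A_(n+1) = (A_n /\ X_n)*, where X_n is the finite
   intersection of the sets x^-1 A_i with i <= n, f x <= n and x in A_i.  Every
   A_n lies in p, hence is a J_delta-set because p is in J_delta(S), and for
   x in A_n the index m = max(n, f x) + 1 satisfies A_m <= x^-1 A_n.  Only the
   filter properties of p and the inclusion p <= p * p are used. *)

Section IdempotentFilter.
Variable T : Type.
Variable op : T -> T -> option T.
Hypothesis Hps : partial_semigroup op.
Variable p : (T -> Prop) -> Prop.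
Hypothesis p_top : p (fun _ => True).
Hypothesis p_mono : forall B C : T -> Prop, p B -> (forall x, B x -> C x) -> p C.
Hypothesis p_inter : forall B C : T -> Prop, p B -> p C -> p (fun x => B x /\ C x).
Hypothesis p_sub_conv : forall B, p B -> conv T op p p B.

Definition star (B : T -> Prop) : T -> Prop := fun x => B x /\ p (inv op x B).

Lemma inv_inv_op x y u B z : op x y = Some u -> inv op y (inv op x B) z -> inv op u B z.
Proof.
  intros Hxy [w [Hyz [v [Hxw Bv]]]].
  exists v; split; [|exact Bv].
  pose proof (Hps x y z) as Hassoc; rewrite Hxy, Hyz in Hassoc.
  now rewrite Hassoc.
Qed.

Lemma star_sub B x : star B x -> B x.
Proof. now intros [Bx _]. Qed.

Lemma filter_star B : p B -> p (star B).
Proof.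
  intro HB.
  apply (p_mono _ _ (p_inter _ _ HB (p_sub_conv _ HB))).
  now intros x [Bx Hx].
Qed.

Lemma filter_inv_star B x : star B x -> p (inv op x (star B)).
Proof.
  intros [_ Hx].
  apply (p_mono _ _ (p_inter _ _ Hx (p_sub_conv _ Hx))).
  intros y [[u [Hxy Bu]] Hy].
  exists u; repeat split; [exact Hxy | exact Bu |].
  apply (p_mono _ _ Hy); intros z; exact (inv_inv_op x y u B z Hxy).
Qed.

Lemma filter_bigcap_lt (I : Type) (g : I -> nat) (Q : I -> T -> Prop) N :
  (forall i j, g i = g j -> i = j) ->
  (forall i, g i < N -> p (Q i)) -> p (fun y => forall i, g i < N -> Q i y).
Proof.
  intros ginj HQ; induction N as [|N IH].
  - apply (p_mono _ _ p_top); intros y _ i Hi; lia.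
  - assert (HN : p (fun y => forall i, g i = N -> Q i y)).
    { destruct (classic (exists i, g i = N)) as [[i0 Hi0]|Hnone].
      - apply (p_mono _ _ (HQ i0 ltac:(lia))); intros y Hy i Hi.
        now rewrite (ginj i i0) by congruence.
      - apply (p_mono _ _ p_top); intros y _ i Hi; exfalso; eauto. }
    apply (p_mono _ _ (p_inter _ _ (IH (fun i Hi => HQ i ltac:(lia))) HN)).
    intros y [Hlt Heq] i Hi.
    destruct (Nat.eq_dec (g i) N); [now apply Heq | apply Hlt; lia].
Qed.

Section Chain.
Variable f : T -> nat.
Hypothesis finj : forall x y, f x = f y -> x = y.
Variable A : T -> Prop.
Hypothesis HA : p A.

Definition refine (B : nat -> T -> Prop) (n : nat) : T -> Prop :=
  fun y => B n y /\
    forall i x, i <= n -> f x <= n -> B i x -> inv op x (B i) y.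

(* [prefix n j] is the j-th set of the chain for every j <= n. *)
Fixpoint prefix (n : nat) : nat -> T -> Prop :=
  match n with
  | 0 => fun _ => star A
  | S k => fun j => if j <=? k then prefix k j else star (refine (prefix k) k)
  end.

Definition chain (n : nat) : T -> Prop := prefix n n.

Lemma prefix_le n j : j <= n -> prefix n j = chain j.
Proof.
  induction n as [|n IH]; intros Hj.
  - now replace j with 0 by lia.
  - destruct (Nat.eq_dec j (S n)) as [->|Hne]; [reflexivity|].
    cbn [prefix]; rewrite (proj2 (Nat.leb_le j n)) by lia.
    apply IH; lia.
Qed.

Lemma chain_S n : chain (S n) = star (refine (prefix n) n).
Proof. cbn [chain prefix]; now rewrite (proj2 (Nat.leb_gt (S n) n)) by lia. Qed.

Lemma refine_prefix n y : refine (prefix n) n y <-> refine chain n y.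
Proof.
  unfold refine; rewrite prefix_le by lia.
  split; intros [Hn Hi]; split; trivial;
    intros i x Hin Hfx; specialize (Hi i x Hin Hfx);
    rewrite ?prefix_le in * by exact Hin; exact Hi.
Qed.

Lemma chain_S_sub n y : chain (S n) y -> refine chain n y.
Proof. rewrite chain_S; intros Hy; apply refine_prefix, star_sub, Hy. Qed.

Lemma chain_decr n y : chain (S n) y -> chain n y.
Proof. intros Hy; apply (chain_S_sub _ _ Hy). Qed.

Lemma chain_sub n y : chain n y -> A y.
Proof.
  induction n as [|n IH]; [apply star_sub|].
  intros Hy; apply IH, chain_decr, Hy.
Qed.

Lemma filter_inv_chain n x : chain n x -> p (inv op x (chain n)).
Proof.
  destruct n as [|n]; [apply filter_inv_star|].
  rewrite chain_S; apply filter_inv_star.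
Qed.

Lemma filter_chain n : p (chain n).
Proof.
  induction n as [|n IH]; [exact (filter_star _ HA)|].
  rewrite chain_S; apply filter_star.
  apply (p_mono (refine chain n)); [|intros y; apply refine_prefix].
  apply p_inter; [exact IH|].
  set (Q i x y := chain i x -> inv op x (chain i) y).
  assert (Hcap : forall i, p (fun y => forall x, f x < S n -> Q i x y)).
  { intros i; apply filter_bigcap_lt; [exact finj|].
    intros x _; destruct (classic (chain i x)) as [Hix|Hix].
    - apply (p_mono _ _ (filter_inv_chain i x Hix)); now intros y Hy _.
    - apply (p_mono _ _ p_top); now intros y _ Hix'. }
  apply (p_mono _ _ (filter_bigcap_lt nat (fun i => i) _ (S n) (fun i j E => E)
                       (fun i _ => Hcap i))).
  intros y Hy i x Hi Hfx; apply Hy; lia.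
Qed.

Lemma chain_inv n x : chain n x ->
  forall y, chain (S (Nat.max n (f x))) y -> inv op x (chain n) y.
Proof.
  intros Hx y Hy; apply chain_S_sub in Hy as [_ Hy].
  apply Hy; [lia | lia | exact Hx].
Qed.

End Chain.

Lemma countable_filter_chain (A : T -> Prop) : countable T -> p A ->
  exists An : nat -> T -> Prop,
    (forall n x, An (S n) x -> An n x) /\
    (forall n x, An n x -> A x) /\
    (forall n x, An n x -> exists m, forall y, An m y -> inv op x (An n) y) /\
    (forall n, p (An n)).
Proof.
  intros [f finj] HA; exists (chain f A); repeat split.
  - apply chain_decr.
  - apply chain_sub.
  - intros n x Hx; exists (S (Nat.max n (f x))); exact (chain_inv f A n x Hx).
  - exact (filter_chain f finj A HA).
Qed.

End IdempotentFilter.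

Theorem corollary4p5 (T : Type) (op : T -> T -> option T)
  (Hps : partial_semigroup op) (Hcount : countable T) (Had : adequate op)
  (A : T -> Prop) :
  (exists p : (T -> Prop) -> Prop,
     in_Jdelta op p /\ idempotent op p /\ p A) ->
  exists An : nat -> (T -> Prop),
    (forall n x, An (n + 1) x -> An n x) /\
    (forall n x, An n x -> A x) /\
    (forall n x, An n x -> exists m, forall y, An m y -> inv op x (An n) y) /\
    (forall n, Jdelta_set op (An n)).
Proof.
  intros [p [[[[p_top [_ [p_mono [p_inter _]]]] _] HJ] [Hid HA]]].
  destruct (countable_filter_chain T op Hps p p_top p_mono p_inter
              (fun B => proj2 (Hid B)) A Hcount HA)
    as (An & Hdecr & Hsub & Hinv & Hfilter).
  exists An; repeat split; trivial.
  - intros n x; rewrite Nat.add_1_r; apply Hdecr.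
  - intros n; apply HJ, Hfilter.
Qed.
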